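(* Let $G=(V,E)$ be a $(5/4,\varepsilon)$-structured graph (for a sufficiently small constant $\varepsilon>0$), and let $S$ be a core-triangle 2-edge-cover of $G$ with core $C$ and triangles $T_1,\dots,T_k$. Let $F^*\subseteq E$ be such that $(V,F^* )$ is 2-edge-connected and $E(C)\subseteq F^*$, and let $Q^*$ be the set of edges of $F^*$ having at least one endpoint not in $V(C)$. Then $\alpha(Q^* )\ge 4k-|Q^*|+\alpha(S)$.
   Context: A 2-edge-cover of $G=(V,E)$ is $S\subseteq E$ with every node incident to at least two edges of $S$. A graph is 2-edge-connected (2EC) if connected and it stays connected after removing any one edge. $S$ is core-triangle if the components of $(V,S)$ are exactly $k+1$ 2EC components: one core $C$ and $k\ge0$ triangles $T_1,\dots,T_k$, and no edge of $G$ joins nodes of two distinct triangles. A valid choice of $Q_i$ for $T_i$ is $Q_i=(E(T_i)\setminus\{u_iv_i\})\cup\{u_iu_i',v_iv_i'\}$ with $u_i\ne v_i\in V(T_i)$, $u_i',v_i'\in V(C)$, $u_iu_i',v_iv_i'\in E$; a valid $Q$ is $\bigcup_iQ_i$ with each $Q_i$ valid. For $F\subseteq E$, $\alpha(F)$ is the number of connected components of $(V,F)$; $\alpha(S)$ is the minimum of $\alpha(Q)$ over valid $Q$. Structured graphs: a graph is 2VC if it has at least 3 nodes, is connected and has no 1-vertex-cut; a 2EC subgraph $D$ of $G$ is $\alpha$-contractible if every 2EC spanning subgraph of $G$ has at least $\frac1\alpha|E(D)|$ edges with both endpoints in $V(D)$; an edge $uv$ is irrelevant if $\{u,v\}$ is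 a 2-vertex-cut; a 2-vertex-cut $\{u,v\}$ is isolating if $G\setminus\{u,v\}$ has exactly two components one of which is a single node, otherwise non-isolating; $G$ is $(\alpha,\varepsilon)$-structured if simple, 2VC, with at least $2/\varepsilon$ nodes, and with no $\alpha$-contractible subgraph on at most $1/\varepsilon$ nodes, no irrelevant edge, and no non-isolating 2-vertex-cut. *)

(* Graphs on a finite vertex type T; edges are 2-element
   subsets {set T}; an edge set is a {set {set T}}. *)
From HB Require Import structures.
From mathcomp Require Import all_boot all_order all_algebra.
From mathcomp Require Import reals.
Set Implicit Arguments. Unset Strict Implicit. Unset Printing Implicit Defensive.
Import Order.TTheory GRing.Theory Num.Theory.

Section Graphs.
Variable T : finType.
Implicit Types (A C W X : {set T}) (E F S D Q : {set {set T}}).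

Definition edge_rel F : rel T := fun x y => [set x; y] \in F.

Definition restr A F : rel T :=
  fun x y => [&& x \in A, y \in A & edge_rel F x y].

Definition connected_on A F : bool :=
  [forall x in A, forall y in A, connect (restr A F) x y].

Definition two_ec_on A F : bool :=
  connected_on A F && [forall e in F, connected_on A (F :\ e)].

Definition comps A F : {set {set T}} :=
  [set [set y in A | connect (restr A F) x y] | x in A].

Definition alpha F : nat := #|comps setT F|.

Definition edges_in A F : {set {set T}} := [set e in F | e \subset A].

Definition simple_graph E : bool := [forall e in E, #|e| == 2].

Definition two_vc E : bool :=
  [&& 3 <= #|T|, connected_on setT E & [forall v, connected_on (~: [set v]) E]].

Definition vcut2 E u v : bool :=
  (u != v) && ~~ connected_on (~: [set u; v]) E.

Definition isolating E u v : bool :=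
  (#|comps (~: [set u; v]) E| == 2) &&
  [exists X in comps (~: [set u; v]) E, #|X| == 1].

Definition two_edge_cover S : Prop :=
  forall v : T, 2 <= #|[set e in S | v \in e]|.

Definition alpha_contractible (R : realFieldType) (a : R) E W D : Prop :=
  [/\ D \subset edges_in W E, 2 <= #|W|, two_ec_on W D &
      forall H : {set {set T}}, H \subset E -> two_ec_on setT H ->
        (#|D|%:R / a <= (#|edges_in W H|%:R : R))%R].

Definition structured (R : realFieldType) (a eps : R) E : Prop :=
  [/\ simple_graph E, two_vc E, (2 / eps <= (#|T|%:R : R))%R,
      (forall W D, ((#|W|%:R : R) <= 1 / eps)%R -> ~ alpha_contractible a E W D) &
      (forall u v, [set u; v] \in E -> ~~ vcut2 E u v) /\
      (forall u v, vcut2 E u v -> isolating E u v)].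

Definition core_triangle E S C (Ts : {set {set T}}) : Prop :=
  [/\ S \subset E, two_edge_cover S,
      comps setT S = C |: Ts, C \notin Ts &
      (forall X, X \in comps setT S -> two_ec_on X (edges_in X S))] /\
  (
      (forall X, X \in Ts -> #|X| = 3 /\
          forall x y, x \in X -> y \in X -> x != y -> [set x; y] \in S)) /\
      (forall X Y, X \in Ts -> Y \in Ts -> X != Y ->
          forall x y, x \in X -> y \in Y -> [set x; y] \notin E).

Definition Qi S X (c : T * T * T * T) : {set {set T}} :=
  let: (u, v, u', v') := c in
  (edges_in X S :\ [set u; v]) :|: [set [set u; u']; [set v; v']].

Definition valid_choice E C X (c : T * T * T * T) : bool :=
  let: (u, v, u', v') := c in
  [&& u != v, u \in X, v \in X, u' \in C, v' \in C,
      [set u; u'] \in E & [set v; v'] \in E].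

Definition validQ E S C (Ts : {set {set T}}) Q : bool :=
  [exists f : {ffun {set T} -> T * T * T * T},
     [forall X in Ts, valid_choice E C X (f X)] &&
     (Q == \bigcup_(X in Ts) Qi S X (f X))].

(* alpha(S) = min over valid Q of alpha(Q) (#|T| is an upper bound for alpha) *)
Definition alphaS E S C (Ts : {set {set T}}) : nat :=
  \big[minn/#|T|]_(Q : {set {set T}} | validQ E S C Ts Q) alpha Q.

Definition Qstar C F : {set {set T}} := [set e in F | ~~ (e \subset C)].

End Graphs.

From HB Require Import structures.
From mathcomp Require Import all_boot all_order all_algebra.
From mathcomp Require Import reals.
From mathcomp Require Import zify.
Set Implicit Arguments. Unset Strict Implicit. Unset Printing Implicit Defensive.

(* The edges of Q* touching a triangle are traded, one triangle at a time, for a valid Q_i.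
   The trades are controlled by the potential alpha F + #|F|, which is #|V| plus the circuit
   rank of F: adding an edge raises it by at most one, and deleting an edge that lies on a
   cycle lowers it by one.  For each triangle, a case analysis on which triangle edges lie in
   F* (every vertex has two F*-neighbours, some F*-edge leaves the triangle, and G is
   2-vertex-connected) produces a valid Q_i whose trade does not increase the potential; a
   missing edge is added and, if it closes a cycle, the cycle edge at its endpoint is dropped.
   As #|Q_i| = 4, each trade raises alpha by at most (number of edges given up) - 4, and
   summing over the k triangles yields a valid Q with alpha Q + 4k <= alpha Q* + #|Q*|. *)

Local Notation linked F := (connect (restr setT F)).

Lemma bigminn_le (I : eqType) (r : seq I) (P : pred I) (F : I -> nat) x0 i :
  i \in r -> P i -> \big[minn/x0]_(j <- r | P j) F j <= F i.
Proof.
elim: r => // a r IH; rewrite in_cons big_cons => /predU1P[<- -> | ir Pi]; first exact: geq_minl.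
by case: (P a); [apply: leq_trans (geq_minr _ _) (IH ir Pi) | exact: IH].
Qed.

Section EdgeSets.
Variable T : finType.

Lemma set2_neq (x a b c d : T) :
  x \in [set a; b] -> x != c -> x != d -> [set a; b] != [set c; d].
Proof. by move=> xab xc xd; apply: contraTneq xab => ->; rewrite !inE negb_or xc. Qed.

Lemma card_pairs4 (u v w u' v' : T) :
  u != v -> u != w -> v != w -> u' \notin [set u; v; w] -> v' \notin [set u; v; w] ->
  #|[set [set u; w]; [set v; w]] :|: [set [set u; u']; [set v; v']]| = 4.
Proof.
rewrite !inE !negb_or => uv uw vw /andP[/andP[u'u u'v] u'w] /andP[/andP[v'u v'v] v'w].
rewrite -setUA !cardsU1 cards1 !inE !negb_or.
have ne := @set2_neq.
by rewrite !(ne u u w v w, ne w u w u u', ne u u w v v', ne v v w u u', ne w v w v v',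
  ne u u u' v v') ?set21 ?set22 // eq_sym.
Qed.

Lemma mem_setU1D (D H : {set {set T}}) (a e : {set T}) :
  e \notin D -> e = a \/ e \in H -> e \in (a |: H) :\: D.
Proof. by move=> eD eaH; apply/setDP; split=> //; apply/setU1P. Qed.

Lemma notin_edges_at (D H : {set {set T}}) b (e : {set T}) :
  D \subset [set f in H | b \in f] -> b \notin e -> e \notin D.
Proof. by move=> /subsetP sD; apply: contra => /sD; rewrite inE => /andP[]. Qed.

End EdgeSets.

Section Components.
Variable T : finType.
Implicit Types (F G H : {set {set T}}) (A K : {set T}).

Definition component F x : {set T} := [set y in setT | linked F x y].

Lemma restrT F x y : restr setT F x y = ([set x; y] \in F).
Proof. by rewrite /restr !in_setT. Qed.

Lemma linked_sym F : connect_sym (restr setT F).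
Proof. by apply: sym_connect_sym => x y; rewrite !restrT setUC. Qed.

Lemma linked_edge F x y : [set x; y] \in F -> linked F x y.
Proof. by move=> xy; apply: connect1; rewrite restrT. Qed.

Lemma linked_subset F G x y : F \subset G -> linked F x y -> linked G x y.
Proof.
move=> sFG; apply: connect_sub => a b; rewrite restrT => ab.
by apply: linked_edge; apply: (subsetP sFG).
Qed.

Lemma connect_exit (r : rel T) A x y : connect r x y -> x \in A -> y \notin A ->
  exists z t, [/\ z \in A, t \notin A & r z t].
Proof.
case/connectP=> p; elim: p x => [|z p IH] x /=; first by move=> _ -> ->.
case/andP=> rxz pz yl xA; have [zA|zA] := boolP (z \in A); first exact: IH pz yl zA.
by exists x, z; split.
Qed.

Lemma mem_component F x y : (y \in component F x) = linked F x y.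
Proof. by rewrite !inE. Qed.

Lemma component_refl F x : x \in component F x.
Proof. by rewrite mem_component connect0. Qed.

Lemma component_eq F x y : linked F x y -> component F x = component F y.
Proof.
move=> xy; apply/setP => z; rewrite !mem_component.
by apply/idP/idP; [apply: connect_trans; rewrite linked_sym | apply: connect_trans].
Qed.

Lemma alphaE F : alpha F = #|[set component F x | x in setT]|.
Proof. by []. Qed.

Lemma alpha_linked F G : linked F =2 linked G -> alpha F = alpha G.
Proof.
move=> eFG; rewrite !alphaE.
suff -> : [set component F x | x in setT] = [set component G x | x in setT] by [].
apply: eq_imset => x.
by apply/setP => y; rewrite !mem_component eFG.
Qed.

(* the [G]-component containing [K]; meaningful when [K] lies inside one [G]-component *)
Definition component_of G K : {set T} :=
  if [pick y in K] is Some y then component G y else set0.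

Lemma component_of_component F G x : F \subset G ->
  component_of G (component F x) = component G x.
Proof.
move=> sFG; rewrite /component_of; case: pickP => [y|/(_ x)]; last by rewrite component_refl.
by rewrite mem_component => /(linked_subset sFG) /component_eq ->.
Qed.

Lemma components_subset F G : F \subset G ->
  [set component G x | x in setT] = component_of G @: [set component F x | x in setT].
Proof.
by move=> sFG; rewrite -imset_comp; apply: eq_imset => x /=; rewrite component_of_component.
Qed.

Lemma alpha_subset F G : F \subset G -> alpha G <= alpha F.
Proof. by move=> sFG; rewrite !alphaE (components_subset sFG) leq_imset_card. Qed.

Lemma alpha_setU1_unlinked F a b : ~~ linked F a b ->
  (alpha ([set a; b] |: F)).+1 <= alpha F.
Proof.
move=> nab; set G := _ |: F; have sFG : F \subset G by apply: subsetUr.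
rewrite !alphaE (components_subset sFG); set A := [set component F x | x in setT].
have bA : component F b \in A by apply: imset_f.
have aA : component F a \in A :\ component F b.
  rewrite !inE imset_f // andbT; apply: contraNneq nab => eab.
  by rewrite -mem_component eab component_refl.
suff -> : component_of G @: A = component_of G @: (A :\ component F b).
  by rewrite (cardsD1 (component F b) A) bA ltnS leq_imset_card.
apply/setP => K; apply/imsetP/imsetP => [[L LA ->]|[L /setD1P[_ LA] ->]]; last by exists L.
have [-> | Lb] := eqVneq L (component F b); last by exists L; rewrite ?inE ?Lb.
exists (component F a) => //; rewrite !component_of_component //; apply/component_eq.
by rewrite linked_sym; apply: linked_edge; rewrite setU11.
Qed.

Lemma alpha_setD1_cycle F a b : linked (F :\ [set a; b]) a b ->
  alpha (F :\ [set a; b]) = alpha F.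
Proof.
move=> cab; apply: alpha_linked => x y; apply/idP/idP; first exact/linked_subset/subsetDl.
apply: connect_sub y => {}x y; rewrite restrT => xy.
have [e|ne] := eqVneq [set x; y] [set a; b]; last by apply: linked_edge; rewrite !inE ne.
have xab : x \in [set a; b] by rewrite -e set21.
have yab : y \in [set a; b] by rewrite -e set22.
by case/set2P: xab => ->; case/set2P: yab => ->; rewrite ?connect0 // linked_sym.
Qed.

Lemma linked_setU1 F a b x y : ~~ linked F x a -> ~~ linked F x b ->
  linked ([set a; b] |: F) x y -> linked F x y.
Proof.
move=> nxa nxb xy; apply: contraTT xy; rewrite -mem_component => yx.
apply/negP => /connect_exit /(_ (component_refl F x) yx) [z [t [zx tx]]].
rewrite mem_component in zx; rewrite restrT !inE => /orP[/eqP e|zt]; last first.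
  by move: tx; rewrite mem_component (connect_trans zx (linked_edge zt)).
have : z \in [set a; b] by rewrite -e set21.
by case/set2P=> ez; [move: nxa | move: nxb]; rewrite -ez zx.
Qed.

Lemma alpha_setU1 F e : alpha F <= (alpha (e |: F)).+1.
Proof.
have [[a b] /= /eqP-> | nopair] := pickP (fun p : T * T => e == [set p.1; p.2]); last first.
  rewrite (@alpha_linked F (e |: F)) // => x y; apply: eq_connect => {}x {}y.
  by rewrite !restrT !inE eq_sym; have /= -> := nopair (x, y).
set G := _ |: F; have sFG : F \subset G by apply: subsetUr.
rewrite !alphaE (components_subset sFG); set A := [set component F x | x in setT].
rewrite (cardsD1 (component F b) A) imset_f // ltnS -(@card_in_imset _ _ (component_of G)).
  by apply/subset_leq_card/imsetS/subsetDl.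
move=> K L /setD1P[nxb /imsetP[x _ eK]] /setD1P[nyb /imsetP[y _ eL]]; subst K L.
rewrite !component_of_component // => exy; apply: component_eq.
have {}exy : linked G x y by rewrite -mem_component exy component_refl.
have unlinked_b z : component F z != component F b -> ~~ linked F z b.
  by apply: contraNN => /component_eq ->.
have {}nxb := unlinked_b _ nxb; have {}nyb := unlinked_b _ nyb.
have [xa|nxa] := boolP (linked F x a); last exact: linked_setU1 nxa nxb exy.
have [ya|nya] := boolP (linked F y a); first by rewrite (connect_trans xa) // linked_sym.
by rewrite linked_sym; apply: linked_setU1 nya nyb _; rewrite linked_sym.
Qed.

Lemma linked_neighbor F z t : linked F z t -> t != z -> exists y, [set z; y] \in F.
Proof.
move=> /(connect_exit (A := [set z])) /[!inE]; rewrite eqxx => /(_ isT) exit tz.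
by have [_ [y [/set1P-> _]]] := exit tz; rewrite restrT; exists y.
Qed.

Lemma linked_to_neighbor H a b : a != b -> linked H a b ->
  exists c, [set c; b] \in H /\ linked (H :\ [set c; b]) a c.
Proof.
move=> ab /connect_exit exit; set Hb := [set e in H | b \notin e].
have Hb_avoid z : ~~ restr setT Hb z b by rewrite restrT inE set22 andbF.
have nab : ~~ linked Hb a b.
  apply/negP => /(connect_exit (A := ~: [set b])).
  rewrite !inE eqxx => /(_ ab isT) [z [t [_]]]; rewrite !inE negbK => /eqP-> zb.
  by move: (Hb_avoid z); rewrite zb.
have [c [t []]] : exists c t,
    [/\ c \in component Hb a, t \notin component Hb a & restr setT H c t].
  by apply: exit; rewrite ?mem_component ?connect0.
rewrite !mem_component restrT => ac nat ct.
have [bct|nbct] := boolP (b \in [set c; t]); last first.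
  by move: nat; rewrite (connect_trans ac) // linked_edge // inE ct nbct.
have tb : t = b.
  by case/set2P: bct => // cb; move: ac; rewrite -cb (negbTE nab).
subst t; exists c; split=> //; apply: linked_subset ac; apply/subsetP => e.
by rewrite !inE => /andP[eH be]; rewrite eH andbT; apply: contraNneq be => ->; apply: set22.
Qed.

Definition potential F := alpha F + #|F|.

Lemma potential_setU1 F e : potential (e |: F) <= (potential F).+1.
Proof.
rewrite /potential cardsU1; have := alpha_subset (subsetUr [set e] F).
by case: (e \in F); lia.
Qed.

Lemma potential_subset F G : F \subset G -> potential F <= potential G.
Proof.
move: {2}#|G :\: F| (erefl #|G :\: F|) => n; elim: n F => [|n IH] F hn sFG.
  by have /eqP-> : F == G by rewrite eqEsubset sFG -setD_eq0 -cards_eq0 hn.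
have [e eGF] : exists e, e \in G :\: F by apply/set0Pn; rewrite -card_gt0 hn.
have [eG eF] := setDP eGF.
have sF' : e |: F \subset G by rewrite subUset sub1set eG.
have hn' : #|G :\: (e |: F)| = n.
  move: hn; rewrite (cardsD1 e) eGF => -[<-].
  by apply: eq_card => x; rewrite !inE negb_or andbA.
apply: leq_trans (IH _ hn' sF'); rewrite /potential cardsU1 (negbTE eF) addnS -addSn.
by rewrite leq_add2r alpha_setU1.
Qed.

Lemma potential_setU1_unlinked F a b : ~~ linked F a b ->
  potential ([set a; b] |: F) <= potential F.
Proof.
move=> nab; have := alpha_setU1_unlinked nab; rewrite /potential cardsU1.
by case: (_ \in F); lia.
Qed.

Lemma potential_setD1_cycle F a b : [set a; b] \in F ->
  linked (F :\ [set a; b]) a b -> (potential (F :\ [set a; b])).+1 <= potential F.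
Proof.
move=> abF cab; rewrite /potential alpha_setD1_cycle // (cardsD1 [set a; b] F) abF.
by rewrite addnS.
Qed.

Lemma potential_swap H e a b : [set a; b] \in H ->
  linked ((e |: H) :\ [set a; b]) a b -> potential ((e |: H) :\ [set a; b]) <= potential H.
Proof.
move=> abH lab; rewrite -ltnS.
apply: leq_trans (potential_setD1_cycle _ lab) (potential_setU1 _ _).
by rewrite !inE abH orbT.
Qed.

Lemma potential_exchange H a b : a != b -> exists D : {set {set T}},
  [/\ D \subset [set e in H | b \in e], [set a; b] \notin D, #|D| <= 1 &
      potential (([set a; b] |: H) :\: D) <= potential H].
Proof.
move=> ab; have [abH|abH] := boolP ([set a; b] \in H).
  exists set0; rewrite sub0set in_set0 cards0 setD0; split=> //.
  by have /setUidPr-> : [set [set a; b]] \subset H by rewrite sub1set.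
have [lab|nlab] := boolP (linked H a b); last first.
  by exists set0; rewrite sub0set in_set0 cards0 setD0 potential_setU1_unlinked.
have [c [cbH lac]] := linked_to_neighbor ab lab.
have cb_ab : [set c; b] != [set a; b] by apply: contraNneq abH => <-.
exists [set [set c; b]]; rewrite sub1set inE cbH set22 cards1 inE eq_sym cb_ab.
split=> //; set G := [set a; b] |: H.
have lcb : linked (G :\ [set c; b]) c b.
  apply: connect_trans (_ : linked _ c a) (linked_edge _).
    rewrite linked_sym; apply: linked_subset lac; apply/subsetP => e.
    by rewrite !inE => /andP[-> ->]; rewrite orbT.
  by rewrite !inE eq_sym cb_ab eqxx.
exact: potential_swap cbH lcb.
Qed.

End Components.

Section CoreTriangle.
Variables (T : finType) (E S : {set {set T}}) (C : {set T}) (Ts Fs : {set {set T}}).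
Hypothesis E_simple : simple_graph E.
Hypothesis E_2vc : two_vc E.
Hypothesis S_sub : S \subset E.
Hypothesis comps_S : comps setT S = C |: Ts.
Hypothesis C_notin_Ts : C \notin Ts.
Hypothesis triangle_S : forall X, X \in Ts -> #|X| = 3 /\
  forall x y, x \in X -> y \in X -> x != y -> [set x; y] \in S.
Hypothesis no_edge_between_triangles : forall X Y, X \in Ts -> Y \in Ts -> X != Y ->
  forall x y, x \in X -> y \in Y -> [set x; y] \notin E.
Hypothesis Fs_sub : Fs \subset E.
Hypothesis Fs_2ec : two_ec_on setT Fs.

Lemma edge_card2 e : e \in E -> #|e| = 2.
Proof. by move=> eE; apply/eqP; move/forall_inP: E_simple; apply. Qed.

Lemma edge_neq a b : [set a; b] \in E -> a != b.
Proof. by move/edge_card2/eqP; rewrite cards2; case: (a != b). Qed.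

Lemma component_S_in x : component S x \in C |: Ts.
Proof. by rewrite -comps_S; apply/imsetP; exists x. Qed.

Lemma comps_S_eq K L x : K \in C |: Ts -> L \in C |: Ts -> x \in K -> x \in L -> K = L.
Proof.
rewrite -comps_S => /imsetP[y _ ->] /imsetP[z _ ->].
rewrite -/(component S y) -/(component S z) !mem_component.
by move=> /component_eq-> /component_eq->.
Qed.

Lemma vertex_cover x : x \in C \/ exists2 X, X \in Ts & x \in X.
Proof.
have := component_S_in x; rewrite !inE => /orP[/eqP <-|xT]; first by left; apply: component_refl.
by right; exists (component S x) => //; apply: component_refl.
Qed.

Lemma C_nonempty : exists c, c \in C.
Proof.
by move: (setU11 C Ts); rewrite -comps_S => /imsetP[x _ ->]; exists x; apply: component_refl.
Qed.

Lemma triangle_notin_C X x : X \in Ts -> x \in X -> x \notin C.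
Proof.
move=> XT xX; apply/negP => xC.
by move: C_notin_Ts; rewrite -(comps_S_eq (setU1r C XT) (setU11 C Ts) xX xC) XT.
Qed.

Lemma triangles_disjoint X Y x : X \in Ts -> Y \in Ts -> X != Y -> x \in X -> x \notin Y.
Proof.
move=> XT YT XY xX; apply: contraNN XY => xY.
by rewrite (comps_S_eq (setU1r C XT) (setU1r C YT) xX xY).
Qed.

Lemma triangle_neighbor X z t : X \in Ts -> z \in X -> [set z; t] \in E -> t \in X \/ t \in C.
Proof.
move=> XT zX zt; have [|[Y YT tY]] := vertex_cover t; [by right | left].
have [-> //|XY] := eqVneq X Y.
by move: (no_edge_between_triangles XT YT XY zX tY); rewrite zt.
Qed.

Lemma Fs_linked x y : linked Fs x y.
Proof. by case/andP: Fs_2ec => /forall_inP/(_ x (in_setT x))/forall_inP/(_ y (in_setT y)). Qed.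

Lemma Fs_linked_setD1 e x y : e \in Fs -> linked (Fs :\ e) x y.
Proof.
case/andP: Fs_2ec => _ /forall_inP h /h.
by move=> /forall_inP/(_ x (in_setT x))/forall_inP/(_ y (in_setT y)).
Qed.

Lemma Fs_two_neighbors z :
  exists y1 y2, [/\ y1 != y2, [set z; y1] \in Fs & [set z; y2] \in Fs].
Proof.
have [t tz] : exists t, t != z.
  apply/existsP; apply: contraTT (E_2vc) => /existsPn all_z.
  rewrite negb_and -ltnNge -cardsT; apply/orP; left.
  suff -> : [set: T] = [set z] by rewrite cards1.
  by apply/setP => t; rewrite !inE; move: (all_z t); rewrite negbK => ->.
have [y1 zy1] := linked_neighbor (Fs_linked z t) tz.
have [y2] := linked_neighbor (Fs_linked_setD1 z t zy1) tz.
rewrite !inE => /andP[ne zy2]; exists y1, y2; split=> //.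
by apply: contraNneq ne => ->.
Qed.

Lemma triangle_C_edge X : X \in Ts -> exists z c, [/\ z \in X, c \in C & [set z; c] \in Fs].
Proof.
move=> XT; have [x xX] : exists x, x \in X.
  by apply/set0Pn; rewrite -card_gt0 (proj1 (triangle_S XT)).
have [c cC] := C_nonempty.
have cX : c \notin X by apply: contraTN cC => /(triangle_notin_C XT).
have [z [t [zX tX zt]]] := connect_exit (Fs_linked x c) xX cX.
rewrite restrT in zt; exists z, t; split=> //.
by case: (triangle_neighbor XT zX (subsetP Fs_sub _ zt)) => // tX'; rewrite tX' in tX.
Qed.

Lemma triangle_C_edge_avoiding X x : X \in Ts -> x \in X ->
  exists z c, [/\ z \in X, z != x, c \in C & [set z; c] \in E].
Proof.
move=> XT xX; have [z0 z0X] : exists z0, z0 \in X :\ x.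
  apply/set0Pn; rewrite -card_gt0.
  by move: (proj1 (triangle_S XT)); rewrite (cardsD1 x) xX add1n => -[->].
have [c cC] := C_nonempty.
have cX : c \notin X :\ x.
  by rewrite !inE negb_and; apply/orP; right; apply: contraTN cC => /(triangle_notin_C XT).
have lz0c : connect (restr (~: [set x]) E) z0 c.
  have cx : c != x by apply: contraNneq (triangle_notin_C XT xX) => <-.
  case/and3P: E_2vc => _ _ /forallP/(_ x)/forall_inP/(_ z0).
  rewrite !inE; case/setD1P: z0X => -> _ => /(_ isT)/forall_inP/(_ c).
  by rewrite !inE cx => /(_ isT).
have [z [t [zX tX]]] := connect_exit lz0c z0X cX.
rewrite /restr /edge_rel !inE => /and3P[_ tx zt]; exists z, t.
move: zX; rewrite !inE => /andP[zx zX]; split=> //.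
have [tX'|//] := triangle_neighbor XT zX zt.
by move: tX; rewrite !inE tx tX'.
Qed.

Lemma triangle_enum X u v : X \in Ts -> u \in X -> v \in X -> u != v ->
  exists w, [/\ u != w, v != w & X = [set u; v; w]].
Proof.
move=> XT uX vX uv; have /cards2P[y [w [yw eX]]] : #|X :\ u| == 2.
  by move: (proj1 (triangle_S XT)); rewrite (cardsD1 u) uX add1n => -[->].
have uX' z : z \in X :\ u -> u != z by case/setD1P; rewrite eq_sym.
have uy : u != y by apply: uX'; rewrite eX set21.
have uw : u != w by apply: uX'; rewrite eX set22.
have eX' : X = [set u; y; w] by rewrite -(setD1K uX) eX setUA.
have : v \in X :\ u by rewrite !inE eq_sym uv.
rewrite eX => /set2P[]->; first by exists w.
by exists y; rewrite [in X = _]eX' setUAC; split; rewrite // eq_sym.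
Qed.

Lemma triangle_edges X u v w : X \in Ts -> X = [set u; v; w] ->
  u != v -> u != w -> v != w ->
  edges_in X S = [set [set u; v]; [set u; w]; [set v; w]].
Proof.
move=> XT eX uv uw vw; have [_ XS] := triangle_S XT.
have [uX vX wX] : [/\ u \in X, v \in X & w \in X] by rewrite eX !inE !eqxx !orbT.
apply/setP => e; rewrite inE; apply/andP/idP => [[eS]|].
  have /cards2P[a [b [ab ->]]] : #|e| == 2 by rewrite edge_card2 // (subsetP S_sub).
  rewrite eX subUset !sub1set !inE -!orbA => /andP[].
  case/or3P=> /eqP ?; subst a; case/or3P=> /eqP ?; subst b; rewrite ?eqxx ?orbT // in ab *;
    by rewrite (setUC [set _]) !eqxx ?orbT.
by rewrite !inE -!orbA => /or3P[]/eqP->; rewrite subUset !sub1set XS ?uX ?vX ?wX.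
Qed.

Lemma Qi_triangle X u v w u' v' : X \in Ts -> X = [set u; v; w] ->
  u != v -> u != w -> v != w ->
  Qi S X (u, v, u', v') = [set [set u; w]; [set v; w]] :|: [set [set u; u']; [set v; v']].
Proof.
move=> XT eX uv uw vw; rewrite /Qi /= (triangle_edges XT eX) // -setUA setU1K //.
rewrite !inE negb_or; apply/andP; split; apply/eqP => /setP e.
  by move: (e v); rewrite !inE eqxx orbT [v == u]eq_sym (negbTE uv) (negbTE vw).
by move: (e u); rewrite !inE eqxx (negbTE uv) (negbTE uw).
Qed.

Lemma Qi_vertex X c e z : valid_choice E C X c -> e \in Qi S X c -> z \in e ->
  z \in X \/ z \in C.
Proof.
case: c => [[[u v] u'] v'] /and5P[_ uX vX u'C /and3P[v'C _ _]].
rewrite /Qi !inE => /orP[/and3P[_ _ /subsetP eX] /eX|]; first by left.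
by case/orP=> /eqP-> /set2P[]->; [left | right | left | right].
Qed.

Lemma Qi_meets X c e : valid_choice E C X c -> e \in Qi S X c -> ~~ [disjoint e & X].
Proof.
case: c => [[[u v] u'] v'] /and5P[_ uX vX _ _]; rewrite /Qi !inE.
case/orP=> [/and3P[_ eS eX] | /orP[]/eqP->];
  try by apply/negP => /disjointFr/(_ (set21 _ _)); rewrite ?uX ?vX.
have [z ze] : exists z, z \in e.
  by apply/set0Pn; rewrite -card_gt0 edge_card2 ?(subsetP S_sub).
by apply/negP => /disjointFr/(_ ze); rewrite (subsetP eX).
Qed.

Lemma Qi_card X c : X \in Ts -> valid_choice E C X c -> #|Qi S X c| = 4.
Proof.
case: c => [[[u v] u'] v'] XT /and5P[uv uX vX u'C /and3P[v'C _ _]].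
have [w [uw vw eX]] := triangle_enum XT uX vX uv.
have notX c : c \in C -> c \notin [set u; v; w].
  by rewrite -eX => cC; apply: contraTN cC; apply: triangle_notin_C XT.
by rewrite (Qi_triangle u' v' XT eX uv uw vw) card_pairs4 ?notX.
Qed.

Definition incident (X : {set T}) := [set e in Fs | ~~ [disjoint e & X]].

Definition nonincreasing_choice R X (c : T * T * T * T) :=
  valid_choice E C X c && (potential (R :|: Qi S X c) <= potential (R :|: incident X)).

Section Triangle.
Variables (X : {set T}) (R : {set {set T}}).
Hypothesis XT : X \in Ts.
Hypothesis R_avoid : forall e, e \in R -> [disjoint e & X].

Local Notation H0 := (R :|: incident X).

Lemma incident_edge a b : [set a; b] \in Fs -> a \in X -> [set a; b] \in H0.
Proof.
move=> abF aX; rewrite !inE abF; apply/orP; right.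
by apply/negP => /disjointFr/(_ (set21 a b)); rewrite aX.
Qed.

Lemma R_avoid_vertex e z : e \in R -> z \in X -> z \notin e.
Proof. by move=> /R_avoid/disjointFl h /h ->. Qed.

Lemma X_C_neq x c : x \in X -> c \in C -> x != c.
Proof. by move=> xX; apply: contraTneq => <-; apply: triangle_notin_C XT xX. Qed.

Section Roles.
Variables u v w : T.
Hypotheses (uv : u != v) (uw : u != w) (vw : v != w).
Hypothesis eX : X = [set u; v; w].

Lemma uX : u \in X. Proof. by rewrite eX !inE eqxx. Qed.
Lemma vX : v \in X. Proof. by rewrite eX !inE eqxx orbT. Qed.
Lemma wX : w \in X. Proof. by rewrite eX !inE eqxx orbT. Qed.

Lemma valid_choice_of u' v' : u' \in C -> v' \in C ->
  [set u; u'] \in E -> [set v; v'] \in E -> valid_choice E C X (u, v, u', v').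
Proof. by move=> u'C v'C uu' vv'; rewrite /valid_choice /= uv uX vX u'C v'C uu' vv'. Qed.

Lemma Qi_subset (H : {set {set T}}) u' v' : R \subset H ->
  [set u; w] \in H -> [set v; w] \in H -> [set u; u'] \in H -> [set v; v'] \in H ->
  R :|: Qi S X (u, v, u', v') \subset H.
Proof.
move=> RH uwH vwH uu'H vv'H; rewrite (Qi_triangle u' v' XT eX uv uw vw).
by rewrite !subUset !sub1set RH uwH vwH uu'H vv'H.
Qed.

Lemma choice_in_Fs u' v' : u' \in C -> v' \in C ->
  [set u; w] \in Fs -> [set v; w] \in Fs -> [set u; u'] \in Fs -> [set v; v'] \in Fs ->
  nonincreasing_choice R X (u, v, u', v').
Proof.
move=> u'C v'C uwF vwF uu'F vv'F; apply/andP; split.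
  by apply: valid_choice_of; rewrite ?(subsetP Fs_sub).
by apply/potential_subset/Qi_subset; rewrite ?subsetUl ?incident_edge ?uX ?vX.
Qed.

Lemma choice_swap u' v' : u' \in C -> v' \in C -> [set u; v] \in Fs ->
  [set u; w] \in Fs -> [set v; w] \in Fs -> [set u; u'] \in Fs -> [set v; v'] \in E ->
  nonincreasing_choice R X (u, v, u', v').
Proof.
move=> u'C v'C uvF uwF vwF uu'F vv'E; apply/andP; split.
  by apply: valid_choice_of => //; apply: (subsetP Fs_sub).
set G := ([set v; v'] |: H0) :\ [set u; v].
have inG e : e \in H0 -> e != [set u; v] -> e \in G.
  by move=> eH ne; apply/setD1P; split=> //; apply/setU1P; right.
have wu : w != u by rewrite eq_sym.
have wv : w != v by rewrite eq_sym.
have u'u : u' != u by rewrite eq_sym X_C_neq ?uX.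
have u'v : u' != v by rewrite eq_sym X_C_neq ?vX.
have uwG : [set u; w] \in G by rewrite inG ?incident_edge ?uX ?(set2_neq (set22 u w)).
have vwG : [set v; w] \in G by rewrite inG ?incident_edge ?vX ?(set2_neq (set22 v w)).
(* the path u - w - v puts the triangle edge uv on a cycle *)
apply: leq_trans (potential_swap (e := [set v; v']) (incident_edge uvF uX) _); last first.
  by rewrite (connect_trans (linked_edge uwG)) // linked_sym linked_edge.
apply/potential_subset/Qi_subset => //.
- apply/subsetP => e eR; apply: inG; first by rewrite inE eR.
  by apply: contraNneq (R_avoid_vertex eR uX) => ->; apply: set21.
- by rewrite inG ?incident_edge ?uX ?(set2_neq (set22 u u')).
apply/setD1P; split; last exact: setU11.
by rewrite (set2_neq (set22 v v')) // eq_sym X_C_neq ?uX ?vX.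
Qed.

Lemma choice_exchange c1 c2 v' : c1 \in C -> c2 \in C -> c1 != c2 ->
  [set u; c1] \in Fs -> [set u; c2] \in Fs -> v' \in C -> [set v; v'] \in Fs ->
  exists u', nonincreasing_choice R X (u, v, u', v').
Proof.
move=> c1C c2C c12 uc1F uc2F v'C vv'F; have wu : w != u by rewrite eq_sym.
have [D1 [D1w vwD1 _ pot1]] := potential_exchange H0 vw.
have [D2 [D2u wuD2 D2card pot2]] := potential_exchange (([set v; w] |: H0) :\: D1) wu.
(* the exchanges drop at most one edge at w and one at u, so one of uc1, uc2 survives *)
have [u' [u'C uu'F uu'D2]] :
    exists u', [/\ u' \in C, [set u; u'] \in Fs & [set u; u'] \notin D2].
  have [uc1D2|] := boolP ([set u; c1] \in D2); last by exists c1.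
  exists c2; split=> //; apply: contraNN c12 => uc2D2.
  have /setP/(_ c1) := card_le1_eqP D2card _ _ uc1D2 uc2D2.
  by rewrite !inE eqxx orbT eq_sym (negbTE (X_C_neq uX c1C)).
exists u'; apply/andP; split; first by apply: valid_choice_of; rewrite ?(subsetP Fs_sub).
apply: leq_trans pot1; apply: leq_trans pot2; apply/potential_subset/Qi_subset.
- apply/subsetP => e eR; apply: mem_setU1D.
    exact: notin_edges_at D2u (R_avoid_vertex eR uX).
  right; apply: mem_setU1D; first exact: notin_edges_at D1w (R_avoid_vertex eR wX).
  by right; apply/setUP; left.
- by rewrite [[set u; w]]setUC; apply: mem_setU1D wuD2 _; left.
- apply: mem_setU1D; first by apply: notin_edges_at D2u _; rewrite !inE negb_or uv uw.
  by right; apply: mem_setU1D vwD1 _; left.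
- apply: mem_setU1D uu'D2 _; right.
  apply: mem_setU1D; last by right; apply: incident_edge uu'F uX.
  by apply: notin_edges_at D1w _; rewrite !inE negb_or wu X_C_neq ?wX.
apply: mem_setU1D; first by apply: notin_edges_at D2u _; rewrite !inE negb_or uv X_C_neq ?uX.
right; apply: mem_setU1D; last by right; apply: incident_edge vv'F vX.
by apply: notin_edges_at D1w _; rewrite !inE negb_or (eq_sym w) vw X_C_neq ?wX.
Qed.
End Roles.

Lemma Fs_neighbor_in_C a b d y : X = [set a; b; d] ->
  [set a; y] \in Fs -> y != b -> y != d -> y \in C.
Proof.
move=> eX ay yb yd; have aX : a \in X by rewrite eX !inE eqxx.
have [|//] := triangle_neighbor XT aX (subsetP Fs_sub _ ay).
rewrite eX !inE (negbTE yb) (negbTE yd) !orbF => /eqP ya.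
by move: (edge_neq (subsetP Fs_sub _ ay)); rewrite ya eqxx.
Qed.

Lemma C_neighbor a b d : X = [set a; b; d] -> [set a; b] \notin Fs ->
  exists2 c, c \in C & [set a; c] \in Fs.
Proof.
move=> eX ab; have [y1 [y2 [y12 ay1 ay2]]] := Fs_two_neighbors a.
have yb y : [set a; y] \in Fs -> y != b by move=> ay; apply: contraNneq ab => <-.
have [y1d|y1d] := eqVneq y1 d.
  by exists y2 => //; apply: Fs_neighbor_in_C eX ay2 (yb _ ay2) _; rewrite -y1d eq_sym.
by exists y1; first exact: Fs_neighbor_in_C eX ay1 (yb _ ay1) y1d.
Qed.

Lemma two_C_neighbors a b d : X = [set a; b; d] ->
  [set a; b] \notin Fs -> [set a; d] \notin Fs -> exists c1 c2,
  [/\ c1 != c2, c1 \in C, c2 \in C, [set a; c1] \in Fs & [set a; c2] \in Fs].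
Proof.
move=> eX ab ad; have [y1 [y2 [y12 ay1 ay2]]] := Fs_two_neighbors a.
have inC y : [set a; y] \in Fs -> y \in C.
  move=> ay; apply: (Fs_neighbor_in_C eX ay).
    by apply: contraNneq ab => <-.
  by apply: contraNneq ad => <-.
by exists y1, y2; rewrite !inC.
Qed.

Lemma choice_missing_edge a b d : a != b -> a != d -> b != d -> X = [set a; b; d] ->
  [set a; b] \notin Fs -> exists c, nonincreasing_choice R X c.
Proof.
move=> ab ad bd eX abF; have ba := ab; rewrite eq_sym in ba.
have eX' : X = [set b; a; d] by rewrite eX (setUC [set a]).
have baF : [set b; a] \notin Fs by rewrite setUC.
have [ca caC acF] := C_neighbor eX abF.
have [cb cbC bcF] := C_neighbor eX' baF.
have [adF|adF] := boolP ([set a; d] \in Fs); last first.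
  have [c1 [c2 [c12 c1C c2C ac1 ac2]]] := two_C_neighbors eX abF adF.
  have [u'] := choice_exchange ab ad bd eX c1C c2C c12 ac1 ac2 cbC bcF.
  by exists (a, b, u', cb).
have [bdF|bdF] := boolP ([set b; d] \in Fs); last first.
  have [c1 [c2 [c12 c1C c2C bc1 bc2]]] := two_C_neighbors eX' baF bdF.
  have [u'] := choice_exchange ba bd ad eX' c1C c2C c12 bc1 bc2 caC acF.
  by exists (b, a, u', ca).
by exists (a, b, ca, cb); apply: (choice_in_Fs (w := d)).
Qed.

Lemma nonincreasing_choice_exists : exists c, nonincreasing_choice R X c.
Proof.
have [p [c [pX cC pcF]]] := triangle_C_edge XT.
have [z [c' [zX zp c'C zc'E]]] := triangle_C_edge_avoiding XT pX.
have pz : p != z by rewrite eq_sym.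
have [w [pw zw eX]] := triangle_enum XT pX zX pz.
have [pzF|] := boolP ([set p; z] \in Fs); last exact: choice_missing_edge pz pw zw eX.
have [wz wp] : w != z /\ w != p by rewrite ![w == _]eq_sym.
have [pwF|] := boolP ([set p; w] \in Fs); last first.
  by apply: choice_missing_edge pw pz wz _; rewrite eX setUAC.
have [zwF|] := boolP ([set z; w] \in Fs); last first.
  by apply: choice_missing_edge zw zp wp _; rewrite eX (setUC [set p]) setUAC.
by exists (p, z, c, c'); apply: (choice_swap (w := w)).
Qed.

Lemma incident_choice_alpha : exists c, valid_choice E C X c /\
  alpha (R :|: Qi S X c) + 4 <= alpha (R :|: incident X) + #|incident X|.
Proof.
have [c /andP[vc pot]] := nonincreasing_choice_exists; exists c; split=> //.
have RQ : R :&: Qi S X c = set0.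
  apply/setP => e; rewrite !inE; apply/negbTE/andP.
  by case=> /R_avoid eX /(Qi_meets vc); rewrite eX.
have := (leq_card_setU R (incident X)).1; move: pot.
by rewrite /potential (cardsU R) RQ cards0 subn0 (Qi_card XT vc); lia.
Qed.
End Triangle.

Lemma incident_Qstar X : X \in Ts -> incident X \subset Qstar C Fs.
Proof.
move=> XT; apply/subsetP => e; rewrite !inE => /andP[-> /=].
apply: contra => /subsetP eC; rewrite disjoint_subset; apply/subsetP => z /eC zC.
by rewrite inE; apply: contraTN zC => /(triangle_notin_C XT).
Qed.

Lemma incident_disjoint X Y e : X \in Ts -> Y \in Ts -> X != Y ->
  e \in incident X -> e \notin incident Y.
Proof.
move=> XT YT XY; rewrite !inE -!setI_eq0 => /andP[eF /set0Pn[x /setIP[xe xX]]].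
rewrite eF /= negbK; apply/negPn/negP => /set0Pn[y /setIP[ye yY]].
have xy : x != y by apply: contraTneq yY => <-; apply: triangles_disjoint XT YT XY xX.
have exy : e = [set x; y].
  apply/eqP; rewrite eq_sym eqEcard subUset !sub1set xe ye cards2 xy.
  by rewrite edge_card2 ?(subsetP Fs_sub).
by move: (no_edge_between_triangles XT YT XY xX yY); rewrite -exy (subsetP Fs_sub).
Qed.

Definition covered (D : {set {set T}}) := \bigcup_(X in D) incident X.

Definition replaced (f : {ffun {set T} -> T * T * T * T}) (D : {set {set T}}) :=
  (\bigcup_(X in D) Qi S X (f X)) :|: (Qstar C Fs :\: covered D).

Lemma covered_setD1 (D : {set {set T}}) X : X \in D ->
  covered D = incident X :|: covered (D :\ X).
Proof. exact: big_setD1. Qed.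

Lemma incident_covered_disjoint (D : {set {set T}}) X :
  D \subset Ts -> X \in Ts -> X \notin D -> incident X :&: covered D = set0.
Proof.
move=> DT XT XD; apply/setP => e; rewrite in_setI in_set0.
apply/negbTE/andP => -[eX /bigcupP[Y YD eY]].
have XY : X != Y by apply: contraNneq XD => ->.
by move: (incident_disjoint XT (subsetP DT _ YD) XY eX); rewrite eY.
Qed.

Lemma replace_step (D : {set {set T}}) X (f0 : {ffun {set T} -> T * T * T * T}) :
  D \subset Ts -> X \in D -> (forall Y, Y \in D :\ X -> valid_choice E C Y (f0 Y)) ->
  exists c, valid_choice E C X c /\
    alpha (replaced [ffun Y => if Y == X then c else f0 Y] D) + 4
      <= alpha (replaced f0 (D :\ X)) + #|incident X|.
Proof.
move=> DT XD f0v; have XT := subsetP DT _ XD.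
set R := (\bigcup_(Y in D :\ X) Qi S Y (f0 Y)) :|: (Qstar C Fs :\: covered D).
have R_avoid e : e \in R -> [disjoint e & X].
  rewrite disjoint_subset inE => /orP[/bigcupP[Y YD0 eQ] | eM].
    apply/subsetP => z ze; rewrite inE; have [YX YD] := setD1P YD0.
    have [zY|zC] := Qi_vertex (f0v Y YD0) eQ ze.
      exact: triangles_disjoint (subsetP DT _ YD) XT YX zY.
    by apply: contraTN zC => /(triangle_notin_C XT).
  apply/subsetP => z ze; rewrite inE.
  move: eM; rewrite !inE (covered_setD1 XD) !inE negb_or => /andP[/andP[eX _] /andP[eF _]].
  by move: eX; rewrite eF /= negbK => /disjointFr/(_ ze) ->.
have [c [vc step]] := incident_choice_alpha XT R_avoid; exists c; split=> //.
suff [-> ->] : replaced [ffun Y => if Y == X then c else f0 Y] D = R :|: Qi S X c /\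
               replaced f0 (D :\ X) = R :|: incident X by [].
split; rewrite /replaced.
  rewrite (big_setD1 X XD) /= ffunE eqxx -setUA setUC; congr ((_ :|: _) :|: _).
  by apply: eq_bigr => Y /setD1P[/negbTE YX _]; rewrite ffunE YX.
rewrite -setUA; congr (_ :|: _); apply/setP => e.
rewrite (covered_setD1 XD) !in_setU !in_setD in_setU negb_or.
have [eX|_] := boolP (e \in incident X); last by rewrite orbF.
have D0T : D :\ X \subset Ts by apply: subset_trans (subsetDl _ _) DT.
have /setP/(_ e) := incident_covered_disjoint D0T XT (negbT (setD11 X D)).
by rewrite in_setI in_set0 eX orbT /= => ->; rewrite (subsetP (incident_Qstar XT)).
Qed.

Lemma replace_triangles (D : {set {set T}}) : D \subset Ts ->
  exists f : {ffun {set T} -> T * T * T * T},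
    (forall X, X \in D -> valid_choice E C X (f X)) /\
    alpha (replaced f D) + 4 * #|D| <= alpha (Qstar C Fs) + #|covered D|.
Proof.
move: {2}#|D| (erefl #|D|) => n; elim: n D => [|n IH] D cD DT.
  have -> : D = set0 by apply/cards0_eq.
  have [x _] := C_nonempty; exists [ffun=> (x, x, x, x)]; split=> [X|]; first by rewrite inE.
  by rewrite /replaced /covered !big_set0 set0U setD0 cards0 muln0 !addn0.
have [X XD] : exists X, X \in D by apply/set0Pn; rewrite -card_gt0 cD.
have D0T : D :\ X \subset Ts by apply: subset_trans (subsetDl _ _) DT.
have cD0 : #|D :\ X| = n by move: cD; rewrite (cardsD1 X) XD add1n => -[].
have [f0 [f0v IH0]] := IH _ cD0 D0T.
have [c [vc step]] := replace_step DT XD f0v.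
exists [ffun Y => if Y == X then c else f0 Y]; split.
  move=> Y YD; rewrite ffunE; have [->|YX] := eqVneq Y X; first exact: vc.
  by apply: f0v; rewrite !inE YX.
move: IH0 step; rewrite (covered_setD1 XD) cardsU.
rewrite (incident_covered_disjoint D0T (subsetP DT _ XD) (negbT (setD11 X D))).
by rewrite cards0 subn0 cD mulnS; lia.
Qed.

Lemma valid_replacement : exists2 Q, validQ E S C Ts Q &
  alpha Q + 4 * #|Ts| <= alpha (Qstar C Fs) + #|Qstar C Fs|.
Proof.
have [f [fv hf]] := replace_triangles (subxx Ts).
exists (\bigcup_(X in Ts) Qi S X (f X)).
  by apply/existsP; exists f; rewrite eqxx andbT; apply/forall_inP.
have covered_all : Qstar C Fs :\: covered Ts = set0.
  apply/setP => e; rewrite in_setD in_set0.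
  apply/negbTE/andP => -[/negP ncov /setIdP[eF /subsetPn[z ze zC]]]; apply: ncov.
  have [zC'|[X XT zX]] := vertex_cover z; first by rewrite zC' in zC.
  apply/bigcupP; exists X => //; rewrite inE eF; apply/negP => /disjointFr/(_ ze).
  by rewrite zX.
move: hf; rewrite /replaced covered_all setU0 => /leq_trans; apply.
by rewrite leq_add2l subset_leq_card //; apply/bigcupsP => X; apply: incident_Qstar.
Qed.

End CoreTriangle.

Local Open Scope ring_scope.

Theorem lemma14 (R : realType) :
  exists eps0 : R, 0 < eps0 /\
  forall eps : R, 0 < eps -> eps <= eps0 ->
  forall (T : finType) (E S : {set {set T}}) (C : {set T})
         (Ts : {set {set T}}) (Fs : {set {set T}}),
    structured (5 / 4 : R) eps E ->
    core_triangle E S C Ts ->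
    Fs \subset E ->
    two_ec_on setT Fs ->
    edges_in C S \subset Fs ->
    ((alpha (Qstar C Fs))%:Z >=
       4 * (#|Ts|)%:Z - (#|Qstar C Fs|)%:Z + (alphaS E S C Ts)%:Z)%R.
Proof.
(* only simplicity and 2-vertex-connectivity of G are used, so any eps0 works; nor is the
   hypothesis E(C) \subset F* needed *)
exists 1; split=> // eps _ _ T E S C Ts Fs [E_simple E_2vc _ _ _].
case=> [[S_sub _ comps_S C_notin_Ts _] [triangle_S no_edge]] Fs_sub Fs_2ec _.
have [Q validQ_Q alpha_Q] := valid_replacement E_simple E_2vc S_sub comps_S C_notin_Ts
  triangle_S no_edge Fs_sub Fs_2ec.
have : (alphaS E S C Ts <= alpha Q)%N := bigminn_le _ _ (mem_index_enum Q) validQ_Q.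
lia.
Qed.
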